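(* Let $K$ be a field of characteristic $0$, and let $a(z)=\sum_{i=0}^u a_iz^i$, $b(z)=\sum_{j=0}^v b_jz^j\in K[z]$ with $a_u\ne0$, $b_v\ne0$, $w=\max\{u-2,v-1\}\ge0$, and such that if $u-1=v$ then $a_u(k+u)+b_v\ne0$ for all integers $k\ge0$. Let $L=-a(z)\frac{d}{dz}+b(z)$ and let $f_0,\ldots,f_w\in(1/z)K[[1/z]]$ be linearly independent over $K$ with $L\cdot f_j\in K[z]$ for all $0\le j\le w$. Then \[\bigcap_{j=0}^w\ker\varphi_{f_j}=L^*\cdot K[t].\]
   Context: For $f=\sum_{k\ge0}f_kz^{-k-1}$, $L\cdot f=-af'+bf$ (termwise derivative), and $\varphi_f:K[t]\to K$ is the $K$-linear map with $\varphi_f(t^k)=f_k$. $L^*$ is the adjoint of $L$, acting by $L^*\cdot P(t)=\frac{d}{dt}(a(t)P(t))+b(t)P(t)$, and $L^*\cdot K[t]=\{L^*\cdot P:P\in K[t]\}$. *)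

From HB Require Import structures.
From mathcomp Require Import all_boot all_order all_algebra.
Set Implicit Arguments. Unset Strict Implicit. Unset Printing Implicit Defensive.
Import Order.TTheory GRing.Theory Num.Theory.
Local Open Scope ring_scope.

Section Defs.
Variable K : fieldType.

(* A series f = \sum_{k>=0} f_k z^{-k-1} in (1/z)K[[1/z]] is represented by
   its coefficient sequence f : nat -> K. *)

Definition lcoef (f : nat -> K) (n : int) : K :=
  if (n < 0)%R then f (absz (n + 1)) else 0.

Definition dlcoef (f : nat -> K) (n : int) : K :=
  (n + 1)%:~R * lcoef f (n + 1).

Definition pmul_coef (p : {poly K}) (g : int -> K) (n : int) : K :=
  \sum_(i < size p) p`_i * g (n - i%:Z).

Definition Lcoef (a b : {poly K}) (f : nat -> K) (n : int) : K :=
  - pmul_coef a (dlcoef f) n + pmul_coef b (lcoef f) n.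

Definition L_in_poly (a b : {poly K}) (f : nat -> K) : Prop :=
  forall n : int, (n < 0)%R -> Lcoef a b f n = 0.

Definition phi (f : nat -> K) (P : {poly K}) : K :=
  \sum_(k < size P) P`_k * f k.

Definition Lstar (a b : {poly K}) (P : {poly K}) : {poly K} :=
  (a * P)^`() + b * P.

End Defs.

From HB Require Import structures.
From mathcomp Require Import all_boot all_order all_algebra zify.
Set Implicit Arguments. Unset Strict Implicit. Unset Printing Implicit Defensive.
Import Order.TTheory GRing.Theory Num.Theory.
Local Open Scope ring_scope.

(** The pairing [phi_f (L^* t^l)] is the coefficient of [z^(-l-1)] in [L f],
  so every [phi_(f_j)] kills the image of [L^*].  Under the hypotheses [L^*]
  raises degrees by exactly [w + 1], hence every polynomial is congruent
  modulo this image to one of degree at most [w].  Since each [t^k] is such a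
  remainder modulo the image, the independence of the [f_j] makes the
  [(w+1) x (w+1)] matrix [(f_j k)] invertible, so a remainder annihilated by
  all [phi_(f_j)] vanishes. *)

Section Phi.
Variable K : fieldType.
Implicit Types (g : nat -> K) (p P : {poly K}).

Lemma phi_widen g P N :
  (size P <= N)%N -> phi g P = \sum_(k < N) P`_k * g k.
Proof.
move=> PN; rewrite /phi (big_ord_widen N (fun k => P`_k * g k) PN) big_mkcond.
apply: eq_bigr => k _; case: ltnP => // Pk.
by rewrite nth_default // mul0r.
Qed.

Lemma phi_is_scalar g : scalar (phi g).
Proof.
move=> c P Q; pose N := maxn (size P) (size Q).
have sizePQ : (size (c *: P + Q)%R <= N)%N.
  rewrite (leq_trans (size_polyD _ _)) // geq_max leq_maxr andbT.
  exact: leq_trans (size_scale_leq _ _) (leq_maxl _ _).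
rewrite !(@phi_widen g _ N) ?leq_maxl ?leq_maxr // mulr_sumr -big_split.
by apply: eq_bigr => k _; rewrite coefD coefZ mulrDl mulrA.
Qed.

HB.instance Definition _ g :=
  GRing.isLinear.Build K {poly K} K *%R (phi g) (phi_is_scalar g).

Lemma phiXn g l : phi g 'X^l = g l.
Proof.
rewrite /phi size_polyXn big_ord_recr /= coefXn eqxx mul1r big1 ?add0r // => i _.
by rewrite coefXn (ltn_eqF (ltn_ord i)) mul0r.
Qed.

Lemma phi_mulXn g p l :
  phi g (p * 'X^l) = \sum_(i < size p) p`_i * g (i + l)%N.
Proof.
have sizepXl : (size (p * 'X^l)%R <= l + size p)%N.
  apply/leq_sizeP => j lj; rewrite coefMXn; case: ltnP => // _.
  by rewrite nth_default // leq_subRL ?(leq_trans (leq_addr _ _) lj) // addnC.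
rewrite (phi_widen g sizepXl) big_split_ord /= big1 ?add0r => [|i _].
  by apply: eq_bigr => i _; rewrite coefMXn ltnNge leq_addr addKn addnC.
by rewrite coefMXn ltn_ord mul0r.
Qed.

Lemma phi_deriv g p :
  phi g p^`() = phi (fun n => n%:R * g n.-1) p.
Proof.
have sizep' : (size p^`() <= size p)%N.
  by apply/leq_sizeP => j pj; rewrite coef_deriv nth_default ?mul0rn //; exact: leqW.
rewrite (phi_widen g sizep') (phi_widen _ (leqnSn _)) big_ord_recl mul0r mulr0 add0r.
by apply: eq_bigr => i _; rewrite coef_deriv lift0 mulr_natl mulrnAl mulrnAr.
Qed.

End Phi.

Lemma lcoef_neg (K : fieldType) (f : nat -> K) k : lcoef f (- k.+1%:Z) = f k.
Proof.
rewrite /lcoef (_ : - k.+1%:Z < 0); last by lia.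
by rewrite (_ : _ + 1 = - k%:Z) ?abszN ?absz_nat //; lia.
Qed.

Lemma dlcoef_neg (K : fieldType) (f : nat -> K) n :
  dlcoef f (- n.+1%:Z) = - (n%:R * f n.-1).
Proof.
rewrite /dlcoef (_ : _ + 1 = - n%:Z); last by lia.
by case: n => [|n]; rewrite ?mul0r ?oppr0 // lcoef_neg mulrNz mulNr.
Qed.

Section Lstar.
Variables (K : fieldType) (a b : {poly K}).

Lemma Lstar_is_linear : linear (Lstar a b).
Proof.
move=> c P Q; rewrite /Lstar !mulrDr -!scalerAr derivD derivZ scalerDr.
by rewrite addrACA.
Qed.

HB.instance Definition _ :=
  GRing.isLinear.Build K {poly K} {poly K} *:%R (Lstar a b) Lstar_is_linear.

Lemma coef_Lstar_Xn e k :
  (Lstar a b 'X^e)`_k =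
  (if (k.+1 < e)%N then 0 else a`_(k.+1 - e)) *+ k.+1 +
  (if (k < e)%N then 0 else b`_(k - e)).
Proof. by rewrite /Lstar coefD coef_deriv !coefMXn. Qed.

Lemma phi_Lstar_Xn (f : nat -> K) l :
  phi f (Lstar a b 'X^l) = Lcoef a b f (- l%:Z - 1).
Proof.
rewrite /Lstar linearD /= phi_deriv !phi_mulXn /Lcoef /pmul_coef -sumrN.
congr (_ + _); apply: eq_bigr => i _.
  by rewrite (_ : _ - _ = - (i + l).+1%:Z) ?dlcoef_neg ?mulrN ?opprK //; lia.
by rewrite (_ : _ - _ = - (i + l).+1%:Z) ?lcoef_neg //; lia.
Qed.

Lemma phi_Lstar_eq0 (f : nat -> K) (Q : {poly K}) :
  L_in_poly a b f -> phi f (Lstar a b Q) = 0.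
Proof.
move=> Lf; rewrite -[Q]coefK poly_def !linear_sum big1 // => i _.
by rewrite !linearZ /= phi_Lstar_Xn Lf ?mulr0 //; lia.
Qed.

End Lstar.

Lemma size_poly_eq_top (K : fieldType) (p : {poly K}) n :
  (size p <= n.+1)%N -> p`_n != 0 -> size p = n.+1.
Proof.
move=> pn pn0; apply/eqP; rewrite eqn_leq pn ltnNge.
by apply: contra pn0 => /leq_sizeP/(_ n (leqnn n))/eqP.
Qed.

Section LstarDegree.
Variables (K : fieldType) (a b : {poly K}).
Hypotheses (char0 : [pchar K] =i pred0) (a0 : a != 0) (b0 : b != 0).
Hypothesis no_cancel : size a = (size b).+1 ->
  forall k : nat, lead_coef a * (k + (size a).-1)%:R + lead_coef b != 0.

Lemma size_Lstar_Xn e :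
  size (Lstar a b 'X^e) = (e + maxn (size a).-2 (size b).-1).+1.
Proof.
have /pcharf0P natf_eq0 := char0.
have := polySpred a0; have := polySpred b0.
(* [lia] would treat differently elaborated copies of [size a] as distinct atoms. *)
set sa := size a; set sb := size b => sbE saE; move Ed : (maxn _ _) => d.
apply: size_poly_eq_top.
  apply/leq_sizeP => k dk; rewrite coef_Lstar_Xn.
  by rewrite !nth_default ?if_same ?mul0rn ?addr0 // -/sa -/sb; lia.
have -> : (Lstar a b 'X^e)`_(e + d) = a`_d.+1 *+ (e + d.+1) + b`_d.
  by rewrite coef_Lstar_Xn -addnS !addKn !ifF //; lia.
have [ab|ab|ab] := ltngtP sa sb.+1.
- have -> : d = sb.-1 by lia.
  rewrite [a`__]nth_default ?mul0rn ?add0r -/sa; last by lia.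
  by rewrite -lead_coefE lead_coef_eq0.
- have -> : d.+1 = sa.-1 by lia.
  rewrite [b`__]nth_default ?addr0 -/sb; last by lia.
  by rewrite -lead_coefE -mulr_natr mulf_neq0 ?lead_coef_eq0 ?natf_eq0 //; lia.
- have -> : d.+1 = sa.-1 by lia.
  have -> : d = sb.-1 by lia.
  by rewrite -mulr_natr; exact: no_cancel ab e.
Qed.

End LstarDegree.

Section ImageDecomposition.
Variables (K : fieldType) (m : nat) (T : {linear {poly K} -> {poly K}}).
Hypothesis size_T_Xn : forall e, size (T 'X^e) = (e + m).+1.

Lemma image_decomp P :
  exists Q R, P = T Q + R /\ (size R <= m)%N.
Proof.
have [n] := ubnPleq (size P); elim: n P => [|n IH] P sizeP.
  by exists 0, P; rewrite linear0 add0r; split=> //; apply: leq_trans sizeP _.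
have [nm|mn] := ltnP n m.
  by exists 0, P; rewrite linear0 add0r; split=> //; apply: leq_trans sizeP nm.
set L := T 'X^(n - m).
have sizeL : size L = n.+1 by rewrite size_T_Xn subnK.
have Ln0 : L`_n != 0.
  by rewrite -[n]/(n.+1.-1) -sizeL -lead_coefE lead_coef_eq0 -size_poly_gt0 sizeL.
pose c := P`_n / L`_n.
have [|Q [R [PQR sizeR]]] := IH (P - c *: L).
  apply/leq_sizeP => k; rewrite leq_eqVlt coefB coefZ => /predU1P[<-|nk].
    by rewrite divfK ?subrr.
  by rewrite !nth_default ?mulr0 ?subrr // ?sizeL // (leq_trans sizeP nk).
exists (Q + c *: 'X^(n - m)), R; split => //.
by rewrite linearD linearZ /= -/L addrAC -PQR subrK.
Qed.

End ImageDecomposition.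

Section Separation.
Variables (K : fieldType) (m : nat) (T : {poly K} -> {poly K}).
Variable f : 'I_m -> nat -> K.
Hypothesis decomp_T : forall P, exists Q R, P = T Q + R /\ (size R <= m)%N.
Hypothesis phi_T : forall j Q, phi (f j) (T Q) = 0.
Hypothesis f_free : forall c : 'I_m -> K,
  (forall k, \sum_(j < m) c j * f j k = 0) -> forall j, c j = 0.

Local Notation phi_mx := (\matrix_(j, k) f j k : 'M[K]_m).

Lemma row_free_phi_mx : row_free phi_mx.
Proof.
apply: inj_row_free => c cM0; apply/rowP => j; rewrite mxE.
apply: (f_free (c := c 0)) => k.
have [Q [R [XkE sizeR]]] := decomp_T 'X^k.
under eq_bigr do rewrite -phiXn XkE linearD /= phi_T add0r (phi_widen _ sizeR).
under eq_bigr do rewrite mulr_sumr.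
rewrite exchange_big big1 // => i _.
have cMi : \sum_(j < m) c 0 j * f j i = 0.
  by move/rowP/(_ i): cM0; rewrite !mxE; under eq_bigr do rewrite mxE.
under eq_bigr do rewrite mulrCA.
by rewrite -mulr_sumr cMi mulr0.
Qed.

Lemma phi_small_eq0 (R : {poly K}) :
  (size R <= m)%N -> (forall j, phi (f j) R = 0) -> R = 0.
Proof.
move=> sizeR phiR0; pose x := \row_(k < m) R`_k.
have /eqP : x *m phi_mx^T = 0.
  apply/rowP => j; rewrite !mxE -[RHS](phiR0 j) (phi_widen _ sizeR).
  by apply: eq_bigr => k _; rewrite !mxE.
rewrite mulmx_free_eq0; last first.
  by rewrite row_free_unit unitmx_tr -row_free_unit row_free_phi_mx.
move=> /eqP x0; apply/polyP => k; rewrite coef0.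
have [km|mk] := ltnP k m; last exact: nth_default (leq_trans sizeR mk).
by have := congr1 (fun y : 'rV_m => y 0 (Ordinal km)) x0; rewrite !mxE.
Qed.

End Separation.

Theorem lemma3p4 (K : fieldType) (a b : {poly K}) (w : nat)
    (f : 'I_w.+1 -> nat -> K) :
  [pchar K] =i pred0 ->
  a != 0 -> b != 0 ->
  (w%:Z = Num.max ((size a).-1%:Z - 2) ((size b).-1%:Z - 1)) ->
  ((size a).-1%:Z - 1 = (size b).-1%:Z ->
     forall k : nat, lead_coef a * (k + (size a).-1)%:R + lead_coef b != 0) ->
  (forall c : 'I_w.+1 -> K,
     (forall k : nat, \sum_(j < w.+1) c j * f j k = 0) -> forall j, c j = 0) ->
  (forall j, L_in_poly a b (f j)) ->
  forall P : {poly K},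
    (forall j, phi (f j) P = 0) <-> (exists Q : {poly K}, P = Lstar a b Q).
Proof.
move=> char0 a0 b0 w_def no_cancel f_free Lf P.
have size_Lstar e : size (Lstar a b 'X^e) = (e + w.+1).+1.
  have := polySpred a0; have := polySpred b0.
  set sa := size a; set sb := size b => sbE saE.
  rewrite size_Lstar_Xn // => [|ab]; first by congr (_ + _).+1; lia.
  by apply: no_cancel; lia.
have phi_Lstar j Q : phi (f j) (Lstar a b Q) = 0 := phi_Lstar_eq0 Q (Lf j).
have decomp := image_decomp size_Lstar.
split=> [phiP0 | [Q -> j]]; last exact: phi_Lstar.
have [Q [R [PQR sizeR]]] := decomp P; exists Q.
suff R0 : R = 0 by rewrite PQR R0 addr0.
apply: (phi_small_eq0 decomp phi_Lstar f_free sizeR) => j.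
by rewrite -(phiP0 j) PQR linearD /= phi_Lstar add0r.
Qed.
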